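(* Let $K\geq 1$ be an integer and let $A$ be a real $m\times n$ matrix (with $K+1\leq n$) whose restricted isometry constant of order $K+1$ satisfies $\delta_{K+1}=\frac{1}{\sqrt{K}+1}$. Then the OMP algorithm perfectly recovers every $K$-sparse signal $x\in\mathbb{R}^n$ from $y=Ax$ in $K$ iterations.
   Context: A vector $x\in\mathbb{R}^n$ is $k$-sparse if $|\mathrm{supp}(x)|\leq k$, where $\mathrm{supp}(x)=\{i: x_i\neq 0\}$. For an $m\times n$ real matrix $A$ and an integer $1\leq k\leq n$, the restricted isometry constant $\delta_k$ is the smallest constant such that $(1-\delta_k)\|x\|_2^2\leq\|Ax\|_2^2\leq(1+\delta_k)\|x\|_2^2$ for all $k$-sparse $x\in\mathbb{R}^n$. For $T\subseteq\{1,\dots,n\}$, $A_T$ denotes the submatrix of $A$ consisting of the columns indexed by $T$, and $A_j$ denotes the $j$-th column of $A$. The OMP (orthogonal matching pursuit) algorithm with input $y$, $A$ and sparsity $K$: set $k=0$, $r^0=y$, $T^0=\emptyset$; while $k<K$: $k\leftarrow k+1$; $t^k=\arg\max_j|\langle r^{k-1},A_j\rangle|$; $T^k=T^{k-1}\cup\{t^k\}$; $\hat x_{T^k}=\arg\min_{z}\|y-A_{T^k}z\|_2$; $r^k=y-A_{T^k}\hat x_{T^k}$. Output $\hat x=\arg\min_{z:\,\mathrm{supp}(z)=T^K}\|y-Az\|_2$. Perfect recovery in $K$ iterations means that in each of the $K$ iterations OMP selects an index of $\mathrm{supp}(x)$ and the output satisfies $\hat x=x$. *)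

From mathcomp Require Import all_boot all_order all_algebra.
From mathcomp Require Import reals.
Set Implicit Arguments. Unset Strict Implicit. Unset Printing Implicit Defensive.
Import Order.TTheory GRing.Theory Num.Theory.
Local Open Scope ring_scope.

Section Defs.
Variable R : realType.

Definition supp n (x : 'cV[R]_n) : {set 'I_n} := [set i | x i 0 != 0].

Definition sparse n (k : nat) (x : 'cV[R]_n) : Prop := (#|supp x| <= k)%N.

Definition sqnorm n (x : 'cV[R]_n) : R := \sum_(i < n) x i 0 ^+ 2.

Definition colinner m n (A : 'M[R]_(m, n)) (r : 'cV[R]_m) (j : 'I_n) : R :=
  \sum_(i < m) r i 0 * A i j.

Definition RIP_bound m n (A : 'M[R]_(m, n)) (k : nat) (d : R) : Prop :=
  forall x : 'cV[R]_n, sparse k x ->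
    (1 - d) * sqnorm x <= sqnorm (A *m x) /\ sqnorm (A *m x) <= (1 + d) * sqnorm x.

Definition is_RIC m n (A : 'M[R]_(m, n)) (k : nat) (delta : R) : Prop :=
  RIP_bound A k delta /\ (forall d, RIP_bound A k d -> delta <= d).

Definition selected n (t : nat -> 'I_n) (k : nat) : {set 'I_n} :=
  [set j | [exists i : 'I_k, t i.+1 == j]].

Definition is_LS m n (A : 'M[R]_(m, n)) (y : 'cV[R]_m) (T : {set 'I_n}) (z : 'cV[R]_n) : Prop :=
  supp z \subset T /\
  forall w : 'cV[R]_n, supp w \subset T -> sqnorm (y - A *m z) <= sqnorm (y - A *m w).

(* (t, r) is a valid run of K iterations of OMP on input y, A
   (any tie-breaking choice for the argmax is allowed):
   r 0 = y, t k is an argmax of |<r^{k-1}, A_j>|, and r k = y - A xhat where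
   xhat is a least-squares solution supported on T^k. *)
Definition OMP_run m n (A : 'M[R]_(m, n)) (y : 'cV[R]_m) (K : nat)
    (t : nat -> 'I_n) (r : nat -> 'cV[R]_m) : Prop :=
  r 0%N = y /\
  forall k, (1 <= k <= K)%N ->
    (forall j, `|colinner A (r k.-1) j| <= `|colinner A (r k.-1) (t k)|) /\
    exists xh : 'cV[R]_n, is_LS A y (selected t k) xh /\ r k = y - A *m xh.

End Defs.

From mathcomp Require Import all_boot all_order all_algebra.
From mathcomp Require Import reals ring lra.
Import Order.TTheory GRing.Theory Num.Theory.
Local Open Scope ring_scope.
Set Implicit Arguments. Unset Strict Implicit. Unset Printing Implicit Defensive.

(* Let [z] be the unrecovered part of [x] at some OMP step, so that the residual is
   [A z], [z] lives on [supp x] (at most [K] indices) and is nonzero.  Suppose the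
   step picks [j] outside [supp x], so [b = <A z, A_j>] dominates every correlation
   on [supp x].  Applying the RIP of order [K + 1] to [z + e e_j] for all real [e]
   gives [b^2 <= d^2 |z|^2], and Cauchy-Schwarz over [supp x] then yields
   [|A z|^2 <= sqrt K d |z|^2 = (1 - d) |z|^2] for [d = 1 / (sqrt K + 1)].  So the
   lower RIP bound is attained at [e = 0], which forces [b = 0], hence all
   correlations on [supp x] vanish and [A z = 0], contradicting the RIP.  The same
   nonvanishing correlation shows that each pick is new, so after [|supp x|] steps
   the least-squares problem is exact and the RIP makes its solution unique. *)


Section Scalar.
Variable R : realFieldType.
Implicit Types p q a b d : R.

Lemma quad_ge0_lin0 p q : (forall e : R, 0 <= e * p + e ^+ 2 * q) -> p = 0.
Proof.
move=> H; apply/eqP; apply/negPn/negP => hp.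
set u := (`|q| + 1)^-1.
have hu : 0 < u by rewrite invr_gt0 ltr_pwDr ?normr_ge0.
have huq : u * q < 1.
  rewrite mulrC ltr_pdivrMr ?ltr_pwDr ?normr_ge0 // mul1r.
  by rewrite (le_lt_trans (real_ler_norm (num_real q))) // ltrDl.
have hp2 : 0 < p ^+ 2 by rewrite exprn_even_gt0.
have := H (- p * u).
have -> : - p * u * p + (- p * u) ^+ 2 * q = - (p ^+ 2 * u * (1 - u * q)) by ring.
have : 0 < p ^+ 2 * u * (1 - u * q).
  by apply: mulr_gt0; [exact: mulr_gt0 | rewrite subr_gt0].
lra.
Qed.

Lemma sqr_le_of_lin_bound d a b :
  0 < d -> (forall e, 2 * e * b <= d * (a + e ^+ 2)) -> b ^+ 2 <= d ^+ 2 * a.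
Proof.
move=> hd H; have := H (b / d).
have he : b / d * d = b by rewrite divfK // gt_eqF.
move: (b / d) he => e he h.
have := ler_wpM2l (ltW hd) h; rewrite -he; nra.
Qed.

End Scalar.

Lemma inv_sqrt_add1_lt1 (R : rcfType) K : (0 < K)%N -> 1 / (Num.sqrt (K%:R : R) + 1) < 1.
Proof.
move=> hK; have hs : 0 < Num.sqrt (K%:R : R) by rewrite sqrtr_gt0 ltr0n.
by rewrite ltr_pdivrMr ?mul1r ?ltrDr // ltr_wpDl // ltW.
Qed.

Section Vectors.
Variable R : realType.

Definition inner n (u v : 'cV[R]_n) : R := \sum_(i < n) u i 0 * v i 0.

Lemma sqnormD n (u v : 'cV[R]_n) (e : R) :
  sqnorm (u + e *: v) = sqnorm u + 2 * e * inner u v + e ^+ 2 * sqnorm v.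
Proof.
rewrite /sqnorm /inner !mulr_sumr -!big_split /=; apply: eq_bigr => i _.
by rewrite !mxE; ring.
Qed.

Lemma sqnorm0 n : sqnorm (0 : 'cV[R]_n) = 0.
Proof. by rewrite /sqnorm big1 // => i _; rewrite mxE expr0n. Qed.

Lemma sqnorm_ge0 n (u : 'cV[R]_n) : 0 <= sqnorm u.
Proof. by apply: sumr_ge0 => i _; rewrite sqr_ge0. Qed.

Lemma sqnorm_le0 n (u : 'cV[R]_n) : sqnorm u <= 0 -> u = 0.
Proof.
move=> h; have h0 : sqnorm u = 0 by apply/eqP; rewrite eq_le h sqnorm_ge0.
apply/matrixP => i j; rewrite (ord1 j) mxE.
have := @psumr_eq0P _ _ _ _ (fun i _ => sqr_ge0 (u i 0)) h0 i isT.
by move/eqP; rewrite sqrf_eq0 => /eqP.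
Qed.

Lemma sqnorm_gt0 n (u : 'cV[R]_n) : u != 0 -> 0 < sqnorm u.
Proof.
move=> hu; rewrite lt_def sqnorm_ge0 andbT.
by apply: contraNneq hu => h; apply/eqP/sqnorm_le0; rewrite h.
Qed.

Lemma inner_delta_mx n (u : 'cV[R]_n) j : inner u (delta_mx j 0) = u j 0.
Proof.
rewrite /inner (bigD1 j) //= big1 ?addr0 => [|i hij]; rewrite mxE.
  by rewrite !eqxx mulr1.
by rewrite (negbTE hij) mulr0.
Qed.

Lemma sqnorm_delta_mx n (j : 'I_n) : sqnorm (delta_mx j 0 : 'cV[R]_n) = 1.
Proof. by rewrite /sqnorm -/(inner _ _) inner_delta_mx mxE !eqxx. Qed.

Lemma colinnerE m n (A : 'M[R]_(m, n)) r j :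
  colinner A r j = inner r (A *m delta_mx j 0).
Proof. by rewrite -colE; apply: eq_bigr => i _; rewrite mxE. Qed.

Lemma supp_subset_coef0 n (z : 'cV[R]_n) (S : {set 'I_n}) i :
  supp z \subset S -> i \notin S -> z i 0 = 0.
Proof.
move=> hz; apply: contraNeq => h.
by apply: (subsetP hz); rewrite inE.
Qed.

Lemma supp_subsetB n (u w : 'cV[R]_n) (S : {set 'I_n}) :
  supp u \subset S -> supp w \subset S -> supp (u - w) \subset S.
Proof.
move=> hu hw; apply/subsetP => i; rewrite inE !mxE; apply: contraNT => hi.
by rewrite (supp_subset_coef0 hu hi) (supp_subset_coef0 hw hi) subrr.
Qed.

Lemma sparse_supp_subset n k (z : 'cV[R]_n) (S : {set 'I_n}) :
  supp z \subset S -> (#|S| <= k)%N -> sparse k z.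
Proof. by move=> hz; apply: leq_trans (subset_leq_card hz). Qed.

Section Matrix.
Variables (m n : nat) (A : 'M[R]_(m, n)).
Local Notation g z i := (colinner A (A *m z) i).

Lemma sqnorm_mulmx_supp (S : {set 'I_n}) (z : 'cV[R]_n) :
  supp z \subset S -> sqnorm (A *m z) = \sum_(i in S) z i 0 * g z i.
Proof.
move=> hz; rewrite /sqnorm; under eq_bigr do rewrite expr2 {2}mxE mulr_sumr.
rewrite exchange_big [RHS]big_mkcond /=; apply: eq_bigr => i _.
case: ifP => [_|/negbT hi]; last first.
  by rewrite big1 // => l _; rewrite (supp_subset_coef0 hz hi) !mulr0.
by rewrite /colinner mulr_sumr; apply: eq_bigr => l _; ring.
Qed.

Lemma sqnorm_mulmx_le (S : {set 'I_n}) (z : 'cV[R]_n) (b lam : R) :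
  supp z \subset S -> (forall i, i \in S -> `|g z i| <= `|b|) ->
  2 * sqnorm (A *m z) * lam <= lam ^+ 2 * sqnorm z + #|S|%:R * b ^+ 2.
Proof.
move=> hz hmax; rewrite (sqnorm_mulmx_supp hz) mulr_sumr mulr_suml.
have hzS : \sum_(i in S) z i 0 ^+ 2 <= sqnorm z.
  rewrite /sqnorm [X in _ <= X](bigID (mem S)) /= lerDl.
  by apply: sumr_ge0 => i _; exact: sqr_ge0.
apply: (@le_trans _ _ (\sum_(i in S) (lam ^+ 2 * z i 0 ^+ 2 + b ^+ 2))).
  apply: ler_sum => i hi; have := hmax i hi.
  have := real_normK (num_real b); have := real_normK (num_real (g z i)).
  have := normr_ge0 (g z i); have := sqr_ge0 (lam * z i 0 - g z i); nra.
rewrite big_split /= sumr_const -mulr_sumr -[b ^+ 2 *+ _]mulr_natl lerD2r.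
by apply: ler_wpM2l; first exact: sqr_ge0.
Qed.

Lemma rip_mulmx_eq0 k d (z : 'cV[R]_n) :
  RIP_bound A k d -> d < 1 -> sparse k z -> A *m z = 0 -> z = 0.
Proof.
move=> hR hd hz hAz; apply/eqP; apply: contraT => hz0.
have [+ _] := hR z hz; rewrite hAz sqnorm0 => hle.
have : 0 < (1 - d) * sqnorm z by rewrite mulr_gt0 ?subr_gt0 ?sqnorm_gt0.
by rewrite ltNge hle.
Qed.

Lemma exists_colinner_neq0 k d (S : {set 'I_n}) (z : 'cV[R]_n) :
  RIP_bound A k d -> d < 1 -> supp z \subset S -> (#|S| <= k)%N -> z != 0 ->
  exists2 i, i \in S & g z i != 0.
Proof.
move=> hR hd hz hS hz0.
have [i /andP[hi hg]|hnone] := pickP [pred i | (i \in S) && (g z i != 0)].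
  by exists i.
case/eqP: hz0; apply: (rip_mulmx_eq0 hR hd (sparse_supp_subset hz hS)).
apply/sqnorm_le0; rewrite (sqnorm_mulmx_supp hz) big1 // => i hi.
by move: (hnone i); rewrite /= hi => /negbFE/eqP ->; rewrite mulr0.
Qed.

Lemma rip_perturb K d (S : {set 'I_n}) (z : 'cV[R]_n) j (e : R) :
  RIP_bound A K.+1 d -> (#|S| <= K)%N -> supp z \subset S -> j \notin S ->
  (1 - d) * (sqnorm z + e ^+ 2)
    <= sqnorm (A *m z) + 2 * e * g z j + e ^+ 2 * sqnorm (A *m delta_mx j 0)
    <= (1 + d) * (sqnorm z + e ^+ 2).
Proof.
move=> hR hS hz hj; set v := z + e *: delta_mx j 0.
have hv : supp v \subset j |: S.
  apply/subsetP => i; rewrite !inE !mxE; have [//|hij] := eqVneq i j.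
  rewrite /= mulr0 addr0 => h.
  by apply: (subsetP hz); rewrite inE.
have hsp : sparse K.+1 v by apply: sparse_supp_subset hv _; rewrite cardsU1 hj.
have hnv : sqnorm v = sqnorm z + e ^+ 2.
  rewrite sqnormD inner_delta_mx (supp_subset_coef0 hz hj) sqnorm_delta_mx.
  by rewrite mulr0 addr0 mulr1.
have [lo up] := hR v hsp.
move: lo up; rewrite hnv /v mulmxDr -scalemxAr sqnormD -colinnerE => lo up.
by rewrite lo up.
Qed.

Lemma colinner_max_in_supp K (S : {set 'I_n}) (z : 'cV[R]_n) j :
  (0 < K)%N -> RIP_bound A K.+1 (1 / (Num.sqrt K%:R + 1)) ->
  (#|S| <= K)%N -> supp z \subset S -> z != 0 -> j \notin S ->
  exists2 i, i \in S & `|g z j| < `|g z i|.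
Proof.
move=> hK hR hS hz hz0 hj.
have [i /andP[hi hlt]|hnone] := pickP [pred i | (i \in S) && (`|g z j| < `|g z i|)].
  by exists i.
have hmax i : i \in S -> `|g z i| <= `|g z j|.
  by move=> hi; move: (hnone i); rewrite /= hi /= leNgt => ->.
set s := Num.sqrt (K%:R : R); set d := 1 / (s + 1) in hR.
have hs : 0 < s by rewrite sqrtr_gt0 ltr0n.
have hd : 0 < d by rewrite divr_gt0 // ltr_wpDl // ltW.
have hsd : 1 - d = s * d by rewrite /d; field; rewrite gt_eqF // ltr_wpDl // ltW.
have hpert e := rip_perturb e hR hS hz hj.
set a := sqnorm z; set c := sqnorm (A *m z); set b := g z j.
have hb2 : b ^+ 2 <= d ^+ 2 * a.
  apply: sqr_le_of_lin_bound hd _ => e.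
  have /andP[_ up] := hpert e; have /andP[lo _] := hpert (- e).
  move: up lo; rewrite sqrrN -/a -/b -/c; lra.
have hSb : #|S|%:R * b ^+ 2 <= s ^+ 2 * (d ^+ 2 * a).
  rewrite sqr_sqrtr ?ler0n //; apply: ler_pM; rewrite ?ler0n ?sqr_ge0 ?ler_nat //.
(* The RIP bound is sharp exactly where [1 - d = s d]: Cauchy-Schwarz then forces [c <= (1 - d) a]. *)
have hc : c <= (1 - d) * a.
  have := sqnorm_mulmx_le (s * d) hz hmax; rewrite -/a -/b -/c hsd => hcs.
  have hsd0 : 0 < s * d by rewrite mulr_gt0.
  rewrite -(ler_pM2l hsd0); move: hcs hSb; lra.
(* Equality at [e = 0] leaves a quadratic in [e] with no constant term that stays [>= 0]. *)
have hb0 : b = 0.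
  suff : 2 * b = 0 by lra.
  apply: (@quad_ge0_lin0 _ _ (sqnorm (A *m delta_mx j 0) - (1 - d))) => e.
  have /andP[lo _] := hpert e; move: lo hc; rewrite -/a -/b -/c; lra.
have [i hi] := exists_colinner_neq0 hR (inv_sqrt_add1_lt1 _ hK) hz (leqW hS) hz0.
have := hmax i hi; rewrite -/b hb0 normr0 normr_le0 => /eqP ->.
by rewrite eqxx.
Qed.

End Matrix.
End Vectors.

Section Selected.
Variables (n : nat) (t : nat -> 'I_n).

Lemma selected0 : selected t 0 = set0.
Proof. by apply/setP => j; rewrite !inE; apply/existsP => -[[]]. Qed.

Lemma selectedS k : selected t k.+1 = t k.+1 |: selected t k.
Proof.
apply/setP => j; rewrite !inE.
apply/existsP/orP => [[i hi]|[hj|/existsP[i hi]]].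
- case: (ltnP i k) => hik.
    by right; apply/existsP; exists (Ordinal hik).
  left; have e : nat_of_ord i = k by apply/eqP; rewrite eqn_leq hik -ltnS ltn_ord.
  by move: hi; rewrite e eq_sym.
- by exists ord_max; rewrite /= eq_sym.
- by exists (widen_ord (leqnSn k) i).
Qed.

Lemma card_selected k : (#|selected t k| <= k)%N.
Proof.
elim: k => [|k IH]; first by rewrite selected0 cards0.
by rewrite selectedS cardsU1 (leq_add (leq_b1 _) IH).
Qed.

Lemma mem_selected k i : (1 <= i <= k)%N -> t i \in selected t k.
Proof.
case/andP => h1 h2; rewrite inE; apply/existsP.
have hi : (i.-1 < k)%N by rewrite prednK.
by exists (Ordinal hi); rewrite /= prednK.
Qed.

Lemma selected_subset k (S : {set 'I_n}) :
  (forall i, (1 <= i <= k)%N -> t i \in S) -> selected t k \subset S.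
Proof.
move=> h; apply/subsetP => j; rewrite inE => /existsP[i /eqP <-].
by apply: h; rewrite /= ltn_ord.
Qed.

Lemma subset_selected k k' : (k <= k')%N -> selected t k \subset selected t k'.
Proof.
move=> hk; apply: selected_subset => i /andP[h1 h2].
by apply: mem_selected; rewrite h1 (leq_trans h2).
Qed.

End Selected.

Lemma LS_residual_orthogonal (R : realType) m n (A : 'M[R]_(m, n)) y T (xh : 'cV[R]_n) i :
  is_LS A y T xh -> i \in T -> colinner A (y - A *m xh) i = 0.
Proof.
move=> [hs hmin] hi.
suff : 2 * colinner A (y - A *m xh) i = 0 by lra.
apply: (@quad_ge0_lin0 _ _ (sqnorm (A *m delta_mx i 0))) => e.
have hw : supp (xh - e *: delta_mx i 0) \subset T.
  apply/subsetP => j; rewrite inE !mxE.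
  have [->|hij] := eqVneq j i; first by [].
  rewrite /= mulr0 subr0 => h.
  by apply: (subsetP hs); rewrite inE.
have := hmin _ hw.
have -> : y - A *m (xh - e *: delta_mx i 0) = (y - A *m xh) + e *: (A *m delta_mx i 0).
  by rewrite mulmxBr -scalemxAr opprB addrCA addrC.
rewrite sqnormD colinnerE; lra.
Qed.

Lemma LS_exact (R : realType) m n (A : 'M[R]_(m, n)) (x : 'cV[R]_n) T xh :
  is_LS A (A *m x) T xh -> supp x \subset T -> A *m (x - xh) = 0.
Proof.
move=> [_ hmin] hx; apply: sqnorm_le0.
by have := hmin x hx; rewrite subrr sqnorm0 mulmxBr.
Qed.

Section OMP.
Variables (R : realType) (m n K : nat) (A : 'M[R]_(m, n)) (x : 'cV[R]_n).
Variables (t : nat -> 'I_n) (r : nat -> 'cV[R]_m).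
Hypotheses (hK : (0 < K)%N) (hR : RIP_bound A K.+1 (1 / (Num.sqrt K%:R + 1))).
Hypotheses (hx : sparse K x) (run : OMP_run A (A *m x) K t r).

Lemma omp_residual k : (k <= K)%N -> exists xh : 'cV[R]_n,
  [/\ supp xh \subset selected t k, r k = A *m (x - xh) &
      forall i, i \in selected t k -> colinner A (r k) i = 0].
Proof.
case: k => [_|k hk].
  exists 0; split; last by move=> i; rewrite selected0 inE.
    by apply/subsetP => i; rewrite inE mxE eqxx.
  by rewrite subr0 run.1.
have [_ [xh [hls ->]]] := run.2 k.+1 hk.
exists xh; split; first exact: hls.1.
  by rewrite mulmxBr.
by move=> i; exact: LS_residual_orthogonal.
Qed.

Lemma omp_step k :
  (k < K)%N -> (k < #|supp x|)%N ->
  selected t k \subset supp x -> #|selected t k| = k ->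
  t k.+1 \in supp x /\ t k.+1 \notin selected t k.
Proof.
move=> hk hkS hsel hcard.
have [xh [hsupp hrk horth]] := omp_residual (ltnW hk).
have hz : supp (x - xh) \subset supp x := supp_subsetB (subxx _) (subset_trans hsupp hsel).
have hz0 : x - xh != 0.
  have /subsetPn[i hix hisel] : ~~ (supp x \subset selected t k).
    by apply: contraTN hkS => /subset_leq_card; rewrite hcard -leqNgt.
  apply: contraTneq hix => /matrixP/(_ i 0).
  by rewrite !mxE (supp_subset_coef0 hsupp hisel) subr0 inE => ->; rewrite eqxx.
have [hmax _] := run.2 k.+1 hk; rewrite /= hrk in hmax.
split.
  apply: contraT => hj.
  have [i _] := colinner_max_in_supp hK hR hx hz hz0 hj.
  by rewrite ltNge hmax.
apply: contraT; rewrite negbK => /horth; rewrite hrk => hg0.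
have [i hi] := exists_colinner_neq0 hR (inv_sqrt_add1_lt1 _ hK) hz (leqW hx) hz0.
by have := hmax i; rewrite hg0 normr0 normr_le0 => ->.
Qed.

Lemma omp_selects_supp k :
  (k <= K)%N -> (k <= #|supp x|)%N ->
  (forall i, (1 <= i <= k)%N -> t i \in supp x) /\ #|selected t k| = k.
Proof.
elim: k => [|k IH] hk hkS.
  by split=> [i /andP[/leq_trans h /h]|]; rewrite ?selected0 ?cards0.
have [IHsupp IHcard] := IH (ltnW hk) (ltnW hkS).
have [htx htsel] := omp_step hk hkS (selected_subset IHsupp) IHcard.
split; last by rewrite selectedS cardsU1 htsel IHcard.
move=> i /andP[h1]; rewrite leq_eqVlt ltnS => /orP[/eqP -> //|h2].
by apply: IHsupp; rewrite h1.
Qed.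

End OMP.

Unset Implicit Arguments.

Theorem theorem2 (R : realType) (m n K : nat) (A : 'M[R]_(m, n))
  (hK : (1 <= K)%N) (hn : (K.+1 <= n)%N)
  (hdelta : is_RIC A K.+1 (1 / (Num.sqrt (K%:R : R) + 1))) :
  forall x : 'cV[R]_n, sparse K x ->
  forall (t : nat -> 'I_n) (r : nat -> 'cV[R]_m),
    OMP_run A (A *m x) K t r ->
    (forall k, (1 <= k <= K)%N -> (k <= #|supp x|)%N -> t k \in supp x) /\
    (forall xh : 'cV[R]_n, is_LS A (A *m x) (selected t K) xh -> xh = x).
Proof.
move=> x hx t r run; have hR := hdelta.1.
have picks := omp_selects_supp hK hR hx run.
split=> [k /andP[hk1 hkK] hkS|xh hls].
  by apply: (picks k hkK hkS).1; rewrite hk1 leqnn.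
have [hsupp hcard] := picks _ hx (leqnn _).
have hxT : supp x \subset selected t K.
  have /eqP <- : selected t #|supp x| == supp x.
    by rewrite eqEcard (selected_subset hsupp) hcard leqnn.
  exact: subset_selected.
have hsp : sparse K.+1 (x - xh).
  apply: sparse_supp_subset (supp_subsetB hxT hls.1) _.
  exact: leqW (card_selected _ _).
apply/esym/subr0_eq/(rip_mulmx_eq0 hR (inv_sqrt_add1_lt1 _ hK) hsp).
exact: LS_exact hls hxT.
Qed.
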